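(* Let $G$ be a $\mathbb{Q}$-group. Then for every $m\ge1$ and every $w\in F_m\setminus[F_m,F_m]$, the word map $w\colon G^m\to G$ is surjective.
   Context: A $\mathbb{Q}$-group is a group together with a map $G\times\mathbb{Q}\to G$, $(g,a)\mapsto g^a$, such that for all $g,h\in G$, $a,b\in\mathbb{Q}$: $g^0=e$, $g^1=g$, $e^a=e$; $g^{a+b}=g^ag^b$, $(g^a)^b=g^{ab}$; $(hgh^{-1})^a=hg^ah^{-1}$; and if $gh=hg$ then $(gh)^a=g^ah^a$. $F_m$ is the free group on $x_1,\dots,x_m$, and $w\in F_m$ defines the word map $G^m\to G$ obtained by substituting $x_i\mapsto g_i$. *)

From mathcomp Require Import all_boot all_algebra.
Set Implicit Arguments. Unset Strict Implicit. Unset Printing Implicit Defensive.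
Import GRing.Theory Num.Theory.
Local Open Scope ring_scope.

Record Group := {
  gcar :> Type;
  gmul : gcar -> gcar -> gcar;
  gone : gcar;
  ginv : gcar -> gcar;
  gmulA : forall x y z, gmul x (gmul y z) = gmul (gmul x y) z;
  gmul1l : forall x, gmul gone x = x;
  gmul1r : forall x, gmul x gone = x;
  gmulVl : forall x, gmul (ginv x) x = gone;
  gmulVr : forall x, gmul x (ginv x) = gone
}.

Record QGroup := {
  qgrp :> Group;
  qpow : qgrp -> rat -> qgrp;
  qpow0 : forall g, qpow g 0 = gone qgrp;
  qpow1 : forall g, qpow g 1 = g;
  qpow_e : forall a, qpow (gone qgrp) a = gone qgrp;
  qpowD : forall g (a b : rat), qpow g (a + b) = gmul (qpow g a) (qpow g b);
  qpowM : forall g (a b : rat), qpow (qpow g a) b = qpow g (a * b);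
  qpowJ : forall g h a,
    qpow (gmul h (gmul g (ginv h))) a = gmul h (gmul (qpow g a) (ginv h));
  qpow_comm : forall g h a, gmul g h = gmul h g ->
    qpow (gmul g h) a = gmul (qpow g a) (qpow h a)
}.

(* Words in the letters x_1^{+-1}, ..., x_m^{+-1}: (i, false) is x_i and
   (i, true) is x_i^{-1}.  Elements of the free group F_m are words modulo
   free equivalence [freeq]. *)
Definition word (m : nat) := seq ('I_m * bool).

Inductive freeq (m : nat) : word m -> word m -> Prop :=
| freeq_refl u : freeq u u
| freeq_sym u v : freeq u v -> freeq v u
| freeq_trans u v w : freeq u v -> freeq v w -> freeq u w
| freeq_cancel u v (i : 'I_m) (b : bool) :
    freeq (u ++ [:: (i, b); (i, ~~ b)] ++ v) (u ++ v).

Definition word_inv (m : nat) (u : word m) : word m :=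
  rev (map (fun p => (p.1, ~~ p.2)) u).

Definition word_comm (m : nat) (u v : word m) : word m :=
  word_inv u ++ word_inv v ++ u ++ v.

(* w lies in the commutator subgroup [F_m, F_m], i.e. w is (freely equal to)
   a product of commutators (inverses of commutators are commutators). *)
Definition in_commutator (m : nat) (w : word m) : Prop :=
  exists s : seq (word m * word m),
    freeq w (flatten (map (fun p => word_comm p.1 p.2) s)).

Definition word_map (G : Group) (m : nat) (w : word m) (g : 'I_m -> G) : G :=
  foldr (fun p acc => gmul (if p.2 then ginv (g p.1) else g p.1) acc)
        (gone G) w.

From Pilot Require Import Defs.
From mathcomp Require Import all_boot all_algebra.
From Stdlib Require Import Morphisms.
Set Implicit Arguments. Unset Strict Implicit. Unset Printing Implicit Defensive.
Import GRing.Theory Num.Theory.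

(* If some exponent sum e_i(w) is nonzero, put x_i := y^(1/e_i(w)) and x_j := 1
   for j <> i; the word map then yields y^(e_i(w)/e_i(w)) = y.  Otherwise w lies
   in [F_m, F_m]: a word with all exponent sums zero has the form x p x^-1 q,
   and x p x^-1 q = p q [q^-1 p q, q^-1 x^-1 q] in F_m, so induction on the
   length applies to p q. *)

Local Open Scope ring_scope.

Section FreeGroupWords.
Variable m : nat.
Implicit Types u v a b p q : word m.

#[local] Instance freeq_equiv : Equivalence (@freeq m).
Proof. split; [exact: freeq_refl | exact: freeq_sym | exact: freeq_trans]. Qed.

#[local] Hint Resolve freeq_refl : core.

Lemma freeq_catl a u v : freeq u v -> freeq (a ++ u) (a ++ v).
Proof.
elim=> {u v} [u|u v _ IH|u v w _ IH1 _ IH2|u v i b].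
- exact: freeq_refl.
- exact: freeq_sym.
- exact: freeq_trans IH1 IH2.
- by rewrite !catA -(catA (a ++ u)); apply: freeq_cancel.
Qed.

Lemma freeq_catr a u v : freeq u v -> freeq (u ++ a) (v ++ a).
Proof.
elim=> {u v} [u|u v _ IH|u v w _ IH1 _ IH2|u v i b].
- exact: freeq_refl.
- exact: freeq_sym.
- exact: freeq_trans IH1 IH2.
- by rewrite -!catA; apply: freeq_cancel.
Qed.

#[local] Instance cat_freeq : Proper (@freeq m ==> @freeq m ==> @freeq m) cat.
Proof.
by move=> a b /(freeq_catr _) Hab c d /(freeq_catl b) Hcd; transitivity (b ++ c).
Qed.

Lemma word_inv_cat u v : word_inv (u ++ v) = word_inv v ++ word_inv u.
Proof. by rewrite /word_inv map_cat rev_cat. Qed.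

Lemma word_invK : involutive (@word_inv m).
Proof.
move=> u; rewrite /word_inv map_rev revK -map_comp -[RHS]map_id.
by apply: eq_map => -[i b] /=; rewrite negbK.
Qed.

Lemma cat_word_invr u b : freeq (u ++ word_inv u ++ b) b.
Proof.
elim: u b => [|[i c] u IH] b /=; first reflexivity.
rewrite (word_inv_cat [:: (i, c)] u) -!catA -cat1s IH.
by have := freeq_cancel [::] b i c.
Qed.

Lemma word_comm_conj q a b :
  freeq (word_comm (word_inv q ++ a ++ q) (word_inv q ++ b ++ q))
        (word_inv q ++ word_comm a b ++ q).
Proof.
by rewrite /word_comm !word_inv_cat word_invK -!catA !cat_word_invr.
Qed.

Lemma freeq_letter_pair_comm i c p q :
  freeq ((i, c) :: p ++ (i, ~~ c) :: q)
        (p ++ q ++ word_comm (word_inv q ++ p ++ q)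
                             (word_inv q ++ [:: (i, ~~ c)] ++ q)).
Proof.
rewrite word_comm_conj cat_word_invr /word_comm -!catA cat_word_invr.
by rewrite /word_inv /= negbK.
Qed.

Definition letter_exponent i (x : 'I_m * bool) : int :=
  if x.1 == i then (-1) ^+ x.2 else 0.

Definition exponent_sum i w := \sum_(x <- w) letter_exponent i x.

Lemma exponent_sum_sign i c u : (i, ~~ c) \notin u ->
  0 <= (-1) ^+ c * exponent_sum i u.
Proof.
move=> notin_u; rewrite /exponent_sum big_seq mulr_sumr sumr_ge0 //.
move=> -[j d] /= ju.
rewrite /letter_exponent /=; case: eqP => [eq_ji | _]; last by rewrite mulr0.
subst j; have -> : d = c by case: c d ju notin_u => [] [] // ->.
by case: (c).
Qed.

Lemma letter_exponentN j i c :
  letter_exponent j (i, ~~ c) = - letter_exponent j (i, c).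
Proof. by rewrite /letter_exponent /=; case: eqP; case: c; rewrite ?oppr0. Qed.

Lemma exponent_sum_letter_pair j i c p q :
  exponent_sum j ((i, c) :: p ++ (i, ~~ c) :: q) = exponent_sum j (p ++ q).
Proof.
rewrite /exponent_sum big_cons !big_cat big_cons letter_exponentN.
by rewrite addrCA addNKr.
Qed.

Lemma exponent_sums0_in_commutator w :
  (forall i, exponent_sum i w = 0) -> in_commutator w.
Proof.
have [n] := ubnP (size w); elim: n w => // n IH [|[i c] r] /= size_r zero_w.
  by exists [::].
have inv_in_r : (i, ~~ c) \in r.
  apply: contraT => /exponent_sum_sign; have /eqP := zero_w i.
  rewrite /exponent_sum big_cons {1}/letter_exponent eqxx addrC addr_eq0.
  by move=> /eqP ->; case: (c).
case/splitPr: inv_in_r size_r zero_w => p q size_w zero_w.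
have size_pq : (size (p ++ q) < n)%N.
  by move: size_w; rewrite !size_cat /= addnS ltnS => /ltnW.
have zero_pq j : exponent_sum j (p ++ q) = 0.
  by rewrite -(exponent_sum_letter_pair j i c) zero_w.
have [s pq_s] := IH _ size_pq zero_pq.
exists (rcons s (word_inv q ++ p ++ q, word_inv q ++ [:: (i, ~~ c)] ++ q)).
rewrite map_rcons flatten_rcons /= freeq_letter_pair_comm catA.
exact: freeq_catr.
Qed.

End FreeGroupWords.

Lemma ginv1 (G : Defs.Group) : ginv (gone G) = gone G.
Proof. by rewrite -[ginv _]gmul1l gmulVr. Qed.

Section QGroupTheory.
Variable G : QGroup.

Lemma qpowN1 (h : G) : qpow h (-1) = ginv h.
Proof.
have h_qpowN1 : gmul h (qpow h (-1)) = gone G.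
  by rewrite -{1}(qpow1 h) -qpowD addrN qpow0.
by rewrite -[ginv h]gmul1r -h_qpowN1 gmulA gmulVl gmul1l.
Qed.

Lemma word_map_exponent_sum m (w : word m) i (h : G) :
  word_map w (fun j => if j == i then h else gone G) =
  qpow h (exponent_sum i w)%:~R.
Proof.
elim: w => [|[j c] w IH] /=; first by rewrite /exponent_sum big_nil qpow0.
rewrite IH /exponent_sum big_cons intrD qpowD /letter_exponent /=.
by case: (j == i); case: c; rewrite /= ?qpow0 ?qpow1 ?qpowN1 ?ginv1.
Qed.

End QGroupTheory.

Theorem lemma5p1 (G : QGroup) (m : nat) (hm : (1 <= m)%N) (w : word m) :
  ~ in_commutator w ->
  forall y : G, exists g : 'I_m -> G, word_map w g = y.
Proof.
move=> not_comm_w y.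
have [i exp_i_neq0 | exp_sums0] := pickP (fun i => exponent_sum i w != 0%R).
  exists (fun j => if j == i then qpow y (exponent_sum i w)%:~R^-1 else gone G).
  by rewrite word_map_exponent_sum qpowM mulVf ?intr_eq0 // qpow1.
case: not_comm_w; apply: exponent_sums0_in_commutator => i.
exact/eqP/negbFE/exp_sums0.
Qed.
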